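(* In the setting below, let $(x^{(k)},z^{(k)})$ be generated by the Bregman PD3O algorithm \[x^{(k+1)}=\mathrm{prox}^{\phi_{\mathrm p}}_{\tau f}\big(x^{(k)},\tau A^Tz^{(k)}+\tau\nabla h(x^{(k)})\big),\] \[z^{(k+1)}=\mathrm{prox}^{\phi_{\mathrm d}}_{\sigma g^*}\Big(z^{(k)},-\sigma A\big(2x^{(k+1)}-x^{(k)}+\tau(\nabla h(x^{(k)})-\nabla h(x^{(k+1)}))\big)\Big),\] with $x^{(0)}\in\operatorname{int}(\operatorname{dom}\phi_{\mathrm p})$, $z^{(0)}\in\operatorname{int}(\operatorname{dom}\phi_{\mathrm d})$. Then for every $k\ge0$, all $x\in\operatorname{dom}f\cap\operatorname{dom}\phi_{\mathrm p}$ and all $z\in\operatorname{dom}g^*\cap\operatorname{dom}\phi_{\mathrm d}$, \begin{align*}\mathcal L(x^{(k+1)},z)-\mathcal L(x,z^{(k+1)})\le{}& d_{\mathrm{pd3o}}\big(x,\nabla h(x),z;x^{(k)},\nabla h(x^{(k)}),z^{(k)}\big)-d_{\mathrm{pd3o}}\big(x,\nabla h(x),z;x^{(k+1)},\nabla h(x^{(k+1)}),z^{(k+1)}\big)\\&-d_{\mathrm{pd3o}}\big(x^{(k+1)},\nabla h(x),z^{(k+1)};x^{(k)},\nabla h(x^{(k)}),z^{(k)}\big).\end{align*}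
   Context: Setting: $f:\mathbb R^n\to\mathbb R\cup\{+\infty\}$ and $g:\mathbb R^m\to\mathbb R\cup\{+\infty\}$ closed convex, $g$ and $f+h$ proper, $A\in\mathbb R^{m\times n}$, $g^*$ the conjugate of $g$. $h:\mathbb R^n\to\mathbb R$ is convex and differentiable with $h(y)-h(x)-\langle\nabla h(x),y-x\rangle\le\frac L2\|y-x\|^2$ for all $x,y$ (Euclidean norm), $L>0$. Lagrangian $\mathcal L(x,z)=f(x)+h(x)+\langle z,Ax\rangle-g^*(z)$ (value $+\infty$ if $x\notin\operatorname{dom}f$, $-\infty$ if $x\in\operatorname{dom}f$, $z\notin\operatorname{dom}g^*$). A Bregman kernel $\phi$ is convex with $\operatorname{int}(\operatorname{dom}\phi)\ne\emptyset$, continuous on $\operatorname{dom}\phi$, continuously differentiable on the interior; distance $d(x,y)=\phi(x)-\phi(y)-\langle\nabla\phi(y),x-y\rangle$ on $\operatorname{dom}\phi\times\operatorname{int}(\operatorname{dom}\phi)$; $\mathrm{prox}^\phi_F(y,a)=\operatorname{argmin}_x\big(F(x)+\langle a,x\rangle+d(x,y)\big)$, assumed to be a unique point of $\operatorname{int}(\operatorname{dom}\phi)$ for all $a$ and $y\in\operatorname{int}(\operatorname{dom}\phi)$. Kernels $\phi_{\mathrm p}$ (on $\mathbb R^n$), $\phi_{\mathrm d}$ (on $\mathbb R^m$) have distances with $d_{\mathrm p}(x,x')\ge\frac12\|x-x'\|^2$ and $d_{\mathrm d}(z,z')\ge\frac12\|z-z'\|_{\mathrm d}^2$ for a norm $\|\cdot\|_{\mathrm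 d}$. $\|A\|=\sup_{v\ne0}\|Av\|_{\mathrm d,*}/\|v\|$ with $\|\cdot\|_{\mathrm d,*}$ the dual norm. Stepsizes $\sigma,\tau>0$ satisfy $\sigma\tau\|A\|^2\le1$ and $\tau\le1/L$. The optimality conditions $0\in\partial f(x)+\nabla h(x)+A^Tz$, $0\in\partial g^*(z)-Ax$ have a solution in $\operatorname{dom}\phi_{\mathrm p}\times\operatorname{dom}\phi_{\mathrm d}$. Finally $d_{\mathrm{pd3o}}(x,y,z;x',y',z')=\frac1\tau d_{\mathrm p}(x,x')+\frac1\sigma d_{\mathrm d}(z,z')+\frac\tau2\|y-y'\|^2-\langle y-y',x-x'\rangle-\langle z-z',A(x-x')\rangle+\tau\langle z-z',A(y-y')\rangle$. *)

From HB Require Import structures.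
From mathcomp Require Import all_boot all_order all_algebra.
From mathcomp Require Import all_classical all_reals ereal.
Set Implicit Arguments. Unset Strict Implicit. Unset Printing Implicit Defensive.
Import Order.TTheory GRing.Theory Num.Theory.
Local Open Scope ring_scope.

Section Defs.
Variable R : realType.

Definition ip n (u v : 'cV[R]_n) : R := \sum_(i < n) u i 0 * v i 0.
Definition enorm n (u : 'cV[R]_n) : R := Num.sqrt (ip u u).

Definition edom n (F : 'cV[R]_n -> \bar R) : set 'cV[R]_n :=
  [set x | F x != +oo%E].

Definition interior_of n (D : set 'cV[R]_n) : set 'cV[R]_n :=
  [set x | exists2 e : R, 0 < e & forall y, enorm (y - x) < e -> D y].

Definition econvex n (F : 'cV[R]_n -> \bar R) : Prop :=
  forall (x y : 'cV[R]_n) (t : R), 0 <= t <= 1 ->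
    (F (t *: x + (1 - t) *: y)%R <= t%:E * F x + (1 - t)%:E * F y)%E.

Definition rconvex n (F : 'cV[R]_n -> R) : Prop :=
  forall x y (t : R), 0 <= t <= 1 ->
    F (t *: x + (1 - t) *: y) <= t * F x + (1 - t) * F y.

Definition elsc n (F : 'cV[R]_n -> \bar R) : Prop :=
  forall x (c : R), (c%:E < F x)%E ->
    exists2 e : R, 0 < e & forall y, enorm (y - x) < e -> (c%:E < F y)%E.

Definition closed_convex n (F : 'cV[R]_n -> \bar R) : Prop :=
  [/\ (forall x, F x != -oo%E), econvex F & elsc F].

Definition proper_fun n (F : 'cV[R]_n -> \bar R) : Prop :=
  (forall x, F x != -oo%E) /\ exists x, F x != +oo%E.

Definition econj m (g : 'cV[R]_m -> \bar R) (z : 'cV[R]_m) : \bar R :=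
  ereal_sup [set ((ip z y)%:E - g y)%E | y in [set: 'cV[R]_m]].

Definition has_grad n (F : 'cV[R]_n -> R) (G : 'cV[R]_n) (x : 'cV[R]_n) : Prop :=
  forall e : R, 0 < e -> exists2 d : R, 0 < d & forall v, enorm v < d ->
    `|F (x + v) - F x - ip G v| <= e * enorm v.

Definition has_egrad n (F : 'cV[R]_n -> \bar R) (G : 'cV[R]_n) (x : 'cV[R]_n) : Prop :=
  F x \is a fin_num /\
  forall e : R, 0 < e -> exists2 d : R, 0 < d & forall v, enorm v < d ->
    (`|F (x + v)%R - F x - (ip G v)%:E| <= (e * enorm v)%:E)%E.

Definition bregman_kernel n (phi : 'cV[R]_n -> \bar R) (gphi : 'cV[R]_n -> 'cV[R]_n)
  : Prop :=
  [/\ (forall x, phi x != -oo%E),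
      econvex phi,
      (exists x, interior_of (edom phi) x),
      (forall x, edom phi x -> forall e : R, 0 < e -> exists2 d : R, 0 < d &
          forall y, edom phi y -> enorm (y - x) < d -> (`|phi y - phi x| < e%:E)%E) &
      ((forall x, interior_of (edom phi) x -> has_egrad phi (gphi x) x) /\
       (forall x, interior_of (edom phi) x -> forall e : R, 0 < e ->
          exists2 d : R, 0 < d & forall y, interior_of (edom phi) y ->
            enorm (y - x) < d -> enorm (gphi y - gphi x) < e))].

Definition bdist n (phi : 'cV[R]_n -> \bar R) (gphi : 'cV[R]_n -> 'cV[R]_n)
  (x y : 'cV[R]_n) : \bar R :=
  (phi x - phi y - (ip (gphi y) (x - y))%:E)%E.

Definition is_prox n (F : 'cV[R]_n -> \bar R) (phi : 'cV[R]_n -> \bar R)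
  (gphi : 'cV[R]_n -> 'cV[R]_n) (y a p : 'cV[R]_n) : Prop :=
  forall x, (F p + (ip a p)%:E + bdist phi gphi p y
             <= F x + (ip a x)%:E + bdist phi gphi x y)%E.

Definition prox_well_defined n (F : 'cV[R]_n -> \bar R) (phi : 'cV[R]_n -> \bar R)
  (gphi : 'cV[R]_n -> 'cV[R]_n) : Prop :=
  forall y a, interior_of (edom phi) y ->
    exists p, [/\ interior_of (edom phi) p, is_prox F phi gphi y a p &
                  forall q, is_prox F phi gphi y a q -> q = p].

Definition is_subgrad n (F : 'cV[R]_n -> \bar R) (v x : 'cV[R]_n) : Prop :=
  F x \is a fin_num /\ forall y, (F x + (ip v (y - x))%:E <= F y)%E.

Definition is_norm m (N : 'cV[R]_m -> R) : Prop :=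
  [/\ (forall z, 0 <= N z),
      (forall z, N z = 0 -> z = 0),
      (forall (a : R) z, N (a *: z) = `|a| * N z) &
      (forall z w, N (z + w) <= N z + N w)].

Definition dual_norm m (N : 'cV[R]_m -> R) (y : 'cV[R]_m) : R :=
  sup [set ip y z | z in [set z | N z <= 1]].

Definition op_norm m n (N : 'cV[R]_m -> R) (A : 'M[R]_(m, n)) : R :=
  sup [set dual_norm N (A *m v) / enorm v | v in [set v : 'cV[R]_n | v != 0]].

Definition lagr m n (f : 'cV[R]_n -> \bar R) (h : 'cV[R]_n -> R)
  (g : 'cV[R]_m -> \bar R) (A : 'M[R]_(m, n)) (x : 'cV[R]_n) (z : 'cV[R]_m)
  : \bar R :=
  if f x == +oo%E then +oo%E
  else if econj g z == +oo%E then -oo%E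
  else (f x + (h x + ip z (A *m x))%:E - econj g z)%E.

Definition dpd3o m n (phip : 'cV[R]_n -> \bar R) (gphip : 'cV[R]_n -> 'cV[R]_n)
  (phid : 'cV[R]_m -> \bar R) (gphid : 'cV[R]_m -> 'cV[R]_m)
  (A : 'M[R]_(m, n)) (tau sigma : R)
  (x y : 'cV[R]_n) (z : 'cV[R]_m) (x' y' : 'cV[R]_n) (z' : 'cV[R]_m) : \bar R :=
  ((tau^-1)%:E * bdist phip gphip x x' + (sigma^-1)%:E * bdist phid gphid z z'
   + (tau / 2 * enorm (y - y') ^+ 2 - ip (y - y') (x - x')
      - ip (z - z') (A *m (x - x')) + tau * ip (z - z') (A *m (y - y')))%:E)%E.

End Defs.

(* Both half-steps are Bregman proximal steps, so the three-point inequality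
   bounds the progress of each by d(u, old) - d(u, new) - d(new, old).  Adding
   the primal and dual inequalities, the coupling terms <z, A x> recombine into
   the bilinear part of d_pd3o, and the gradient terms of h are controlled by
   1/(2L) |grad h u - grad h p|^2 <= h u - h p - <grad h p, u - p>, which
   absorbs tau/2 |grad h x - grad h x_(k+1)|^2 because tau <= 1/L. *)

From HB Require Import structures.
From mathcomp Require Import all_boot all_order all_algebra.
From mathcomp Require Import all_classical all_reals ereal.
From mathcomp Require Import ring lra.
Import Order.TTheory GRing.Theory Num.Theory.
Local Open Scope ring_scope.
Set Implicit Arguments. Unset Strict Implicit.

Section InnerProduct.
Variables (R : realType) (n : nat).
Implicit Types (a : R) (u v w : 'cV[R]_n).

Lemma ipC u v : ip u v = ip v u.
Proof. by apply: eq_bigr => i _; rewrite mulrC. Qed.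

Lemma ipDl u v w : ip (u + v) w = ip u w + ip v w.
Proof. by rewrite /ip -big_split; apply: eq_bigr => i _; rewrite !mxE mulrDl. Qed.

Lemma ipZl a u w : ip (a *: u) w = a * ip u w.
Proof. by rewrite /ip mulr_sumr; apply: eq_bigr => i _; rewrite !mxE mulrA. Qed.

Lemma ipNl u w : ip (- u) w = - ip u w.
Proof. by rewrite -scaleN1r ipZl mulN1r. Qed.

Lemma ipBl u v w : ip (u - v) w = ip u w - ip v w.
Proof. by rewrite ipDl ipNl. Qed.

Lemma ipDr u v w : ip w (u + v) = ip w u + ip w v.
Proof. by rewrite ipC ipDl !(ipC w). Qed.

Lemma ipZr a u w : ip w (a *: u) = a * ip w u.
Proof. by rewrite ipC ipZl ipC. Qed.

Lemma ipNr u w : ip w (- u) = - ip w u.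
Proof. by rewrite ipC ipNl ipC. Qed.

Lemma ipBr u v w : ip w (u - v) = ip w u - ip w v.
Proof. by rewrite ipDr ipNr. Qed.

Lemma ip_ge0 u : 0 <= ip u u.
Proof. by apply: sumr_ge0 => i _; rewrite -expr2 sqr_ge0. Qed.

Lemma enorm_ge0 u : 0 <= enorm u.
Proof. exact: sqrtr_ge0. Qed.

Lemma enorm_sqr u : enorm u ^+ 2 = ip u u.
Proof. by rewrite sqr_sqrtr // ip_ge0. Qed.

Lemma enormZ a u : 0 <= a -> enorm (a *: u) = a * enorm u.
Proof.
move=> a_ge0; rewrite /enorm ipZl ipZr mulrA -expr2 sqrtrM ?sqr_ge0 //.
by rewrite sqrtr_sqr ger0_norm.
Qed.

Lemma convex_combE a u v : a *: u + (1 - a) *: v = v + a *: (u - v).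
Proof. by rewrite scalerBl scale1r scalerBr addrCA. Qed.

End InnerProduct.

Lemma ip_trmxl (R : realType) m n (A : 'M[R]_(m, n)) z x :
  ip (A^T *m z) x = ip z (A *m x).
Proof.
have ipE k (u v : 'cV[R]_k) : ip u v = (u^T *m v) 0 0.
  by rewrite !mxE; apply: eq_bigr => i _; rewrite mxE.
by rewrite !ipE trmx_mul trmxK mulmxA.
Qed.

Section Gradient.
Variables (R : realType) (n : nat) (F : 'cV[R]_n -> R) (G p : 'cV[R]_n).
Hypothesis dF : has_grad F G p.

Lemma has_grad_segment v e : 0 < e ->
  exists2 t, 0 < t <= 1 & `|F (p + t *: v) - F p - t * ip G v| <= t * e.
Proof.
move=> e_gt0; have K_ge0 := enorm_ge0 v; set K := enorm v in K_ge0.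
have [|d d_gt0 Fd] := dF (e := e / (K + 1)); first by apply: divr_gt0; lra.
have t_gt0 : 0 < d / (d + K) by apply: divr_gt0; lra.
exists (d / (d + K)); first by rewrite t_gt0 ler_pdivrMr; lra.
have tK : d / (d + K) * K < d by rewrite mulrAC ltr_pdivrMr; nra.
have := Fd (d / (d + K) *: v); rewrite enormZ ?(ltW t_gt0) // -/K ipZr => /(_ tK).
move/le_trans; apply; rewrite mulrAC ler_pdivrMr; nra.
Qed.

Lemma has_grad_ip_le v c :
  (forall t, 0 < t <= 1 -> F (p + t *: v) - F p <= t * c) -> ip G v <= c.
Proof.
move=> Fc; apply/ler_addgt0Pr => e e_gt0.
have [t t01 Ft] := has_grad_segment v e_gt0; have /andP[t_gt0 _] := t01.
move: Ft (Fc t t01); rewrite ler_norml => /andP[Ft _] Fct.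
rewrite -(ler_pM2l t_gt0); lra.
Qed.

Lemma has_grad_ip_ge v c :
  (forall t, 0 < t <= 1 -> t * c <= F (p + t *: v) - F p) -> c <= ip G v.
Proof.
move=> Fc; apply/ler_addgt0Pr => e e_gt0.
have [t t01 Ft] := has_grad_segment v e_gt0; have /andP[t_gt0 _] := t01.
move: Ft (Fc t t01); rewrite ler_norml => /andP[_ Ft] Fct.
rewrite -(ler_pM2l t_gt0); lra.
Qed.

End Gradient.

Lemma has_egrad_fine (R : realType) n (phi : 'cV[R]_n -> \bar R) G p :
  has_egrad phi G p -> has_grad (fun x => fine (phi x)) G p.
Proof.
case=> phip dphi e /dphi[d d_gt0 Hd]; exists d => // v /Hd.
by case: (phi (p + v)) => [r| |]; rewrite -(fineK phip) //= -!EFinB abse_EFin lee_fin.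
Qed.

Lemma rconvex_grad_le (R : realType) n (h : 'cV[R]_n -> R) G p v :
  rconvex h -> has_grad h G p -> h p + ip G (v - p) <= h v.
Proof.
move=> h_convex dh; suff : ip G (v - p) <= h v - h p by lra.
apply: (has_grad_ip_le dh) => t /andP[t_gt0 t_le1].
have := h_convex v p t; rewrite (ltW t_gt0) t_le1 convex_combE => /(_ isT); lra.
Qed.

(* Compare [h] at [v := u - (gh u - gh p) / L]: convexity at [p] bounds
   [h v] from below, smoothness at [u] bounds it from above. *)
Lemma smooth_grad_sqr_le (R : realType) n (h : 'cV[R]_n -> R) gh (L : R) p u :
  rconvex h -> (forall x, has_grad h (gh x) x) -> 0 < L ->
  (forall x y, h y - h x - ip (gh x) (y - x) <= L / 2 * enorm (y - x) ^+ 2) ->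
  1 / (2 * L) * enorm (gh u - gh p) ^+ 2 <= h u - h p - ip (gh p) (u - p).
Proof.
move=> h_convex dh L_gt0 h_smooth.
set dg := gh u - gh p; set k := L^-1; set v := u - k *: dg.
have kL : L * k = 1 by rewrite mulfV ?gt_eqF.
have vp : v - p = (u - p) - k *: dg by rewrite /v addrAC.
have vu : v - u = - (k *: dg) by rewrite /v addrAC subrr add0r.
have lower := rconvex_grad_le v h_convex (dh p).
have upper := h_smooth u v.
rewrite vp ipBr ipZr in lower.
rewrite vu enorm_sqr ipNl ipNr !ipZl !ipZr ipNr ipZr !mulrN !opprK in upper.
have dgE : ip (gh u) dg = ip (gh p) dg + ip dg dg by rewrite /dg ipBl; ring.
have Lk2 : L / 2 * (k * (k * ip dg dg)) = k / 2 * ip dg dg.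
  by rewrite -[RHS]mul1r -kL; ring.
have -> : 1 / (2 * L) = k / 2 by rewrite mul1r invfM mulrC.
rewrite dgE Lk2 in upper; rewrite enorm_sqr; lra.
Qed.

Lemma mule_neqNy (R : realType) (c : R) (u : \bar R) :
  0 <= c -> u != -oo%E -> (c%:E * u)%E != -oo%E.
Proof.
move=> c_ge0; case: u => [r| |] //= _; rewrite mulry.
move: c_ge0; rewrite le_eqVlt => /orP[/eqP <-|/gtr0_sg ->].
  by rewrite sgr0 mul0e.
by rewrite mul1e.
Qed.

Lemma fin_numZ (R : realType) (c : R) (u : \bar R) :
  0 < c -> ((c%:E * u)%E \is a fin_num) = (u \is a fin_num).
Proof.
move=> c_gt0; case: u => [r| |]; first by rewrite -EFinM.
  by rewrite mulry gtr0_sg // mul1e.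
by rewrite mulrNy gtr0_sg // mul1e.
Qed.

Section ExtendedConvexity.
Variables (R : realType) (n : nat).
Implicit Types (F : 'cV[R]_n -> \bar R) (x y : 'cV[R]_n).

Lemma edom_fin_num F x : (forall y, F y != -oo%E) -> edom F x -> F x \is a fin_num.
Proof. by move=> FNy Fx; rewrite fin_numE FNy. Qed.

Lemma econvexZ F (c : R) : 0 < c -> (forall x, F x != -oo%E) -> econvex F ->
  econvex (fun x => c%:E * F x)%E.
Proof.
move=> c_gt0 FNy F_convex x y t /andP[t_ge0 t_le1] /=.
rewrite muleCA [X in (_ + X)%E]muleCA -muleDr //.
  by rewrite lee_pmul2l ?lte_fin //; apply: F_convex; rewrite t_ge0.
by apply: ltninfty_adde_def; rewrite inE ltNye mule_neqNy // subr_ge0.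
Qed.

Lemma econvex_fin F x y t : (forall z, F z != -oo%E) -> econvex F ->
  F x \is a fin_num -> F y \is a fin_num -> 0 <= t <= 1 ->
  exists2 r, F (t *: x + (1 - t) *: y) = r%:E &
    r <= t * fine (F x) + (1 - t) * fine (F y).
Proof.
move=> FNy F_convex Fx Fy t01; have := F_convex x y t t01.
rewrite -(fineK Fx) -(fineK Fy) -!EFinM -EFinD.
by case: (F _) (FNy (t *: x + (1 - t) *: y)) => [r| |] // _; exists r.
Qed.

End ExtendedConvexity.

Section Conjugate.
Variables (R : realType) (m : nat) (g : 'cV[R]_m -> \bar R).

Lemma econj_ge z y : ((ip z y)%:E - g y <= econj g z)%E.
Proof. by apply: ereal_sup_ubound; exists y. Qed.

Lemma econj_neqNy : proper_fun g -> forall z, econj g z != -oo%E.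
Proof.
case=> gNy [y gy] z; have gy_fin : g y \is a fin_num by rewrite fin_numE gNy.
rewrite -ltNye; apply: lt_le_trans (econj_ge z y).
by rewrite -(fineK gy_fin) -EFinB ltNyr.
Qed.

Lemma econvex_econj : (forall y, g y != -oo%E) -> econvex (econj g).
Proof.
move=> gNy z1 z2 t /andP[t_ge0 t_le1]; apply: ge_ereal_sup => _ [y _ <-].
case: (g y) (gNy y) (econj_ge z1 y) (econj_ge z2 y) => [r| |] // _ le1 le2.
  have -> : ((ip (t *: z1 + (1 - t) *: z2) y)%:E - r%:E =
      t%:E * ((ip z1 y)%:E - r%:E) + (1 - t)%:E * ((ip z2 y)%:E - r%:E))%E.
    by rewrite -!(EFinM, EFinB, EFinD) ipDl !ipZl; congr EFin; ring.
  by apply: leeD; apply: lee_wpmul2l; rewrite // lee_fin subr_ge0.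
by rewrite addeNy leNye.
Qed.

End Conjugate.

Section BregmanProx.
Variables (R : realType) (n : nat) (F phi : 'cV[R]_n -> \bar R).
Variables (gphi : 'cV[R]_n -> 'cV[R]_n) (y a p : 'cV[R]_n).
Hypotheses (FNy : forall x, F x != -oo%E) (phiNy : forall x, phi x != -oo%E).
Hypothesis p_prox : is_prox F phi gphi y a p.

Lemma prox_fin_num x : F x \is a fin_num -> phi x \is a fin_num ->
  phi y \is a fin_num -> phi p \is a fin_num -> F p \is a fin_num.
Proof.
move=> Fx phix phiy phip; rewrite fin_numE FNy /=; apply/negP => /eqP Fp.
have := p_prox x; rewrite /bdist Fp -(fineK Fx) -(fineK phix) -(fineK phiy).
by rewrite -(fineK phip) -!(EFinM, EFinB, EFinD) !addye.
Qed.

(* Moving from the minimizer [p] towards [x] cannot decrease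
   [F + <a, .> + d(., y)]; the first-order expansion of [phi] at [p] turns this
   into the extra term [d(x, p)]. *)
Lemma prox_three_point x : econvex F -> econvex phi ->
  F x \is a fin_num -> phi x \is a fin_num -> phi y \is a fin_num ->
  has_egrad phi (gphi p) p ->
  (F p + (ip a p)%:E + bdist phi gphi p y + bdist phi gphi x p
    <= F x + (ip a x)%:E + bdist phi gphi x y)%E.
Proof.
move=> F_convex phi_convex Fx phix phiy dphi; have phip := dphi.1.
have Fp := prox_fin_num Fx phix phiy phip.
suff : fine (F p) - fine (F x) - ip a (x - p) + ip (gphi y) (x - p)
         <= ip (gphi p) (x - p).
  rewrite /bdist -(fineK Fx) -(fineK Fp) -(fineK phix) -(fineK phiy) -(fineK phip).
  by rewrite -!(EFinM, EFinB, EFinD) lee_fin !ipBr; lra.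
apply: (has_grad_ip_ge (has_egrad_fine dphi)) => t /andP[t_gt0 t_le1].
have t01 : 0 <= t <= 1 by rewrite (ltW t_gt0).
have [Ft EFt Ft_le] := econvex_fin FNy F_convex Fx Fp t01.
have [Pt EPt _] := econvex_fin phiNy phi_convex phix phip t01.
have := p_prox (t *: x + (1 - t) *: p); rewrite /bdist EFt EPt.
rewrite -(fineK Fp) -(fineK phiy) -(fineK phip) -!(EFinM, EFinB, EFinD) lee_fin.
rewrite convex_combE in EPt *; rewrite EPt /= !(ipDr, ipNr, ipZr); lra.
Qed.

End BregmanProx.

Lemma interior_in (R : realType) n (D : set 'cV[R]_n) x : interior_of D x -> D x.
Proof.
case=> e e_gt0; apply; rewrite subrr /enorm /ip big1 ?sqrtr0 // => i _.
by rewrite mxE mul0r.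
Qed.

Lemma prox_iter_interior (R : realType) n (F phi : 'cV[R]_n -> \bar R) gphi
    (xs a : nat -> 'cV[R]_n) :
  prox_well_defined F phi gphi -> interior_of (edom phi) (xs 0%N) ->
  (forall k, is_prox F phi gphi (xs k) (a k) (xs k.+1)) ->
  forall k, interior_of (edom phi) (xs k).
Proof.
move=> prox_wd x0 step; elim=> // k xk.
by have [p [p_int _ p_uniq]] := prox_wd _ (a k) xk; rewrite (p_uniq _ (step k)).
Qed.

(* [dpd3o] with its two Bregman distances replaced by the reals [Dp] and [Dd]. *)
Definition pd3o_gap (R : realType) m n (A : 'M[R]_(m, n)) (tau sigma Dp Dd : R)
    (x y : 'cV[R]_n) (z : 'cV[R]_m) (x' y' : 'cV[R]_n) (z' : 'cV[R]_m) : R :=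
  tau^-1 * Dp + sigma^-1 * Dd
  + (tau / 2 * enorm (y - y') ^+ 2 - ip (y - y') (x - x')
     - ip (z - z') (A *m (x - x')) + tau * ip (z - z') (A *m (y - y'))).

Lemma pd3o_step_real (R : realType) m n (A : 'M[R]_(m, n)) (tau sigma L : R)
    (u xk xp gu gk gp : 'cV[R]_n) (w zk zp : 'cV[R]_m)
    (fu fp gw gz hu hp Buk Bup Bpk Cwk Cwp Cpk : R) :
  0 < tau -> 0 < sigma -> tau <= 1 / L ->
  tau * fp + ip (tau *: (A^T *m zk) + tau *: gk) xp + Bpk + Bup
    <= tau * fu + ip (tau *: (A^T *m zk) + tau *: gk) u + Buk ->
  sigma * gz + ip (- (sigma *: (A *m (2%:R *: xp - xk + tau *: (gk - gp))))) zp
    + Cpk + Cwp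
    <= sigma * gw + ip (- (sigma *: (A *m (2%:R *: xp - xk + tau *: (gk - gp))))) w
       + Cwk ->
  1 / (2 * L) * enorm (gu - gp) ^+ 2 <= hu - hp - ip gp (u - xp) ->
  fp + (hp + ip w (A *m xp)) - gw - (fu + (hu + ip zp (A *m u)) - gz)
    <= pd3o_gap A tau sigma Buk Cwk u gu w xk gk zk
       - pd3o_gap A tau sigma Bup Cwp u gu w xp gp zp
       - pd3o_gap A tau sigma Bpk Cpk xp gu zp xk gk zk.
Proof.
move=> tau_gt0 sigma_gt0 tau_le primal dual coco.
have tau_half : tau / 2 * enorm (gu - gp) ^+ 2 <= 1 / (2 * L) * enorm (gu - gp) ^+ 2.
  by rewrite ler_wpM2r ?sqr_ge0 // mul1r invfM; move: tau_le; rewrite mul1r; lra.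
rewrite !ipDl !ipZl !ip_trmxl in primal.
move: primal; rewrite -(@ler_pM2l _ tau^-1) ?invr_gt0 //.
rewrite !mulrDr !mulKf ?gt_eqF // => primal.
rewrite !ipNl !ipZl in dual.
move: dual; rewrite -(@ler_pM2l _ sigma^-1) ?invr_gt0 //.
rewrite !mulrDr !mulrN !mulKf ?gt_eqF // => dual.
rewrite ![ip (A *m _) _]ipC !mulmxDr !mulmxN -!scalemxAr mulmxDr mulmxN in dual.
rewrite !(ipDr, ipNr, ipZr) in dual.
rewrite /pd3o_gap !mulmxBr !ipBl !ipBr in coco *.
lra.
Qed.

Section PD3OStep.
Variables (R : realType) (n m : nat) (f : 'cV[R]_n -> \bar R) (g : 'cV[R]_m -> \bar R).
Variables (h : 'cV[R]_n -> R) (gh : 'cV[R]_n -> 'cV[R]_n) (L : R) (A : 'M[R]_(m, n)).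
Variables (phip : 'cV[R]_n -> \bar R) (gphip : 'cV[R]_n -> 'cV[R]_n).
Variables (phid : 'cV[R]_m -> \bar R) (gphid : 'cV[R]_m -> 'cV[R]_m) (sigma tau : R).
Hypotheses (fNy : forall x, f x != -oo%E) (f_convex : econvex f).
Hypothesis g_proper : proper_fun g.
Hypotheses (h_convex : rconvex h) (h_grad : forall x, has_grad h (gh x) x).
Hypothesis L_gt0 : 0 < L.
Hypothesis h_smooth :
  forall x y, h y - h x - ip (gh x) (y - x) <= L / 2 * enorm (y - x) ^+ 2.
Hypotheses (phipNy : forall x, phip x != -oo%E) (phip_convex : econvex phip).
Hypotheses (phidNy : forall z, phid z != -oo%E) (phid_convex : econvex phid).
Hypotheses (sigma_gt0 : 0 < sigma) (tau_gt0 : 0 < tau) (tau_le : tau <= 1 / L).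

Let tau_f x := (tau%:E * f x)%E.
Let sigma_gc z := (sigma%:E * econj g z)%E.

Lemma pd3o_step xk xp u zk zp w :
  edom phip xk -> has_egrad phip (gphip xp) xp ->
  edom phid zk -> has_egrad phid (gphid zp) zp ->
  is_prox tau_f phip gphip xk (tau *: (A^T *m zk) + tau *: gh xk) xp ->
  is_prox sigma_gc phid gphid zk
    (- (sigma *: (A *m (2%:R *: xp - xk + tau *: (gh xk - gh xp))))) zp ->
  edom f u -> edom phip u -> edom (econj g) w -> edom phid w ->
  (lagr f h g A xp w - lagr f h g A u zp
    <= dpd3o phip gphip phid gphid A tau sigma u (gh u) w xk (gh xk) zk
     - dpd3o phip gphip phid gphid A tau sigma u (gh u) w xp (gh xp) zp
     - dpd3o phip gphip phid gphid A tau sigma xp (gh u) zp xk (gh xk) zk)%E.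
Proof.
move=> xk_dom dphip zk_dom dphid xp_prox zp_prox u_fdom u_dom w_gdom w_dom.
have conjNy := econj_neqNy g_proper.
have tau_fNy x : tau_f x != -oo%E := mule_neqNy (ltW tau_gt0) (fNy x).
have sigma_gcNy z : sigma_gc z != -oo%E := mule_neqNy (ltW sigma_gt0) (conjNy z).
have fu := edom_fin_num fNy u_fdom.
have gw := edom_fin_num conjNy w_gdom.
have phip_u := edom_fin_num phipNy u_dom.
have phip_xk := edom_fin_num phipNy xk_dom.
have phid_w := edom_fin_num phidNy w_dom.
have phid_zk := edom_fin_num phidNy zk_dom.
have tau_fu : tau_f u \is a fin_num by rewrite /tau_f fin_numZ.
have sigma_gcw : sigma_gc w \is a fin_num by rewrite /sigma_gc fin_numZ.
have fxp : f xp \is a fin_num.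
  rewrite -(fin_numZ _ tau_gt0).
  exact: (prox_fin_num tau_fNy xp_prox tau_fu) dphip.1.
have gzp : econj g zp \is a fin_num.
  rewrite -(fin_numZ _ sigma_gt0).
  exact: (prox_fin_num sigma_gcNy zp_prox sigma_gcw) dphid.1.
have primal := prox_three_point tau_fNy phipNy xp_prox
  (econvexZ tau_gt0 fNy f_convex) phip_convex tau_fu phip_u phip_xk dphip.
have gc_convex := econvexZ sigma_gt0 conjNy (econvex_econj g_proper.1).
have dual := prox_three_point sigma_gcNy phidNy zp_prox
  gc_convex phid_convex sigma_gcw phid_w phid_zk dphid.
have coco := smooth_grad_sqr_le xp u h_convex h_grad L_gt0 h_smooth.
move: primal dual; rewrite /tau_f /sigma_gc /lagr /dpd3o /bdist.
rewrite -(fineK fu) -(fineK fxp) -(fineK gw) -(fineK gzp).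
rewrite -(fineK phip_u) -(fineK phip_xk) -(fineK dphip.1).
rewrite -(fineK phid_w) -(fineK phid_zk) -(fineK dphid.1) /=.
rewrite -!(EFinM, EFinB, EFinD) !lee_fin => primal dual.
exact: pd3o_step_real tau_gt0 sigma_gt0 tau_le primal dual coco.
Qed.

End PD3OStep.

Unset Implicit Arguments.

Theorem mainTheorem8 (R : realType) (n m : nat)
  (f : 'cV[R]_n -> \bar R) (g : 'cV[R]_m -> \bar R)
  (h : 'cV[R]_n -> R) (gh : 'cV[R]_n -> 'cV[R]_n) (L : R)
  (A : 'M[R]_(m, n))
  (phip : 'cV[R]_n -> \bar R) (gphip : 'cV[R]_n -> 'cV[R]_n)
  (phid : 'cV[R]_m -> \bar R) (gphid : 'cV[R]_m -> 'cV[R]_m)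
  (Nd : 'cV[R]_m -> R) (sigma tau : R)
  (xs : nat -> 'cV[R]_n) (zs : nat -> 'cV[R]_m) :
  (* f, g closed convex; g and f + h proper *)
  closed_convex f -> closed_convex g ->
  proper_fun g -> proper_fun (fun x => (f x + (h x)%:E)%E) ->
  (* h convex, differentiable with gradient gh, L-smooth *)
  rconvex h -> (forall x, has_grad h (gh x) x) -> 0 < L ->
  (forall x y, h y - h x - ip (gh x) (y - x) <= L / 2 * enorm (y - x) ^+ 2) ->
  (* Bregman kernels *)
  bregman_kernel phip gphip -> bregman_kernel phid gphid ->
  (* well-definedness of the two prox operators used *)
  prox_well_defined (fun x => (tau%:E * f x)%E) phip gphip ->
  prox_well_defined (fun z => (sigma%:E * econj g z)%E) phid gphid ->
  (* strong convexity of the kernels *)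
  is_norm Nd ->
  (forall x x', edom phip x -> interior_of (edom phip) x' ->
     ((1 / 2 * enorm (x - x') ^+ 2)%:E <= bdist phip gphip x x')%E) ->
  (forall z z', edom phid z -> interior_of (edom phid) z' ->
     ((1 / 2 * Nd (z - z') ^+ 2)%:E <= bdist phid gphid z z')%E) ->
  (* step sizes *)
  0 < sigma -> 0 < tau ->
  sigma * tau * op_norm Nd A ^+ 2 <= 1 -> tau <= 1 / L ->
  (* the optimality conditions have a solution in dom phip x dom phid *)
  (exists (xo : 'cV[R]_n) (zo : 'cV[R]_m), [/\ edom phip xo, edom phid zo,
      is_subgrad f (- (gh xo + A^T *m zo)) xo &
      is_subgrad (econj g) (A *m xo) zo]) ->
  (* initialization and the Bregman PD3O iteration *)
  interior_of (edom phip) (xs 0%N) -> interior_of (edom phid) (zs 0%N) ->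
  (forall k, is_prox (fun x => (tau%:E * f x)%E) phip gphip (xs k)
               (tau *: (A^T *m zs k) + tau *: gh (xs k)) (xs k.+1)) ->
  (forall k, is_prox (fun z => (sigma%:E * econj g z)%E) phid gphid (zs k)
               (- (sigma *: (A *m (2%:R *: xs k.+1 - xs k
                                  + tau *: (gh (xs k) - gh (xs k.+1))))))
               (zs k.+1)) ->
  forall (k : nat) (x : 'cV[R]_n) (z : 'cV[R]_m),
    edom f x -> edom phip x -> edom (econj g) z -> edom phid z ->
    (lagr f h g A (xs k.+1) z - lagr f h g A x (zs k.+1)
     <= dpd3o phip gphip phid gphid A tau sigma
          x (gh x) z (xs k) (gh (xs k)) (zs k)
        - dpd3o phip gphip phid gphid A tau sigma
          x (gh x) z (xs k.+1) (gh (xs k.+1)) (zs k.+1)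
        - dpd3o phip gphip phid gphid A tau sigma
          (xs k.+1) (gh x) (zs k.+1) (xs k) (gh (xs k)) (zs k))%E.
Proof.
(* The norm [Nd], the strong convexity of the kernels, the coupling bound on
   [sigma * tau] and the saddle point only serve to make [dpd3o] nonnegative,
   which the one-step inequality does not need. *)
move=> [fNy f_convex _] _ g_proper _ h_convex h_grad L_gt0 h_smooth
  [phipNy phip_convex _ _ [dphip _]] [phidNy phid_convex _ _ [dphid _]]
  proxp_wd proxd_wd _ _ _ sigma_gt0 tau_gt0 _ tau_le _ x0_int z0_int x_step z_step
  k x z x_fdom x_dom z_gdom z_dom.
have x_int := prox_iter_interior proxp_wd x0_int x_step.
have z_int := prox_iter_interior proxd_wd z0_int z_step.
apply: (pd3o_step fNy f_convex g_proper h_convex h_grad L_gt0 h_smooth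
  phipNy phip_convex phidNy phid_convex sigma_gt0 tau_gt0 tau_le) => //.
- exact: interior_in (x_int k).
- exact: dphip (x_int k.+1).
- exact: interior_in (z_int k).
- exact: dphid (z_int k.+1).
Qed.
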